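(* The AllSet framework, as well as its extension with residual connections, are special cases of the MultiSet framework. Precisely: given any functions $f_{\mathcal{V}\to\mathcal{E}}, f_{\mathcal{E}\to\mathcal{V}}$, each permutation invariant in its first argument, defining an AllSet scheme $$\bm z_e^{(t+1)} = f_{\mathcal{V}\to\mathcal{E}}\big(\{\bm x_u^{(t)}\}_{u\in e};\ \bm z_e^{(t)}\big),\qquad \bm x_v^{(t+1)} = f_{\mathcal{E}\to\mathcal{V}}\big(\{\bm z_e^{(t+1)}\}_{e\in\mathcal{E}_v};\ \bm x_v^{(t)}\big)$$ (or the extended AllSet scheme in which the node update is instead $\bm x_v^{(t+1)} = f_{\mathcal{E}\to\mathcal{V}}\big(\{\bm z_e^{(t+1)}\}_{e\in\mathcal{E}_v};\ \{\bm x_v^{(k)}\}_{k=0}^{t}\big)$), run for $T$ steps, there is a choice of the MultiSet functions such that the MultiSet scheme reproduces exactly the hyperedge representations $\bm z_e^{(t)}$ and final node representations $\bm x_v^{(T)}$ of that AllSet (respectively extended AllSet) scheme.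
   Context: A hypergraph is $\mathcal{G}=(\mathcal{V},\mathcal{E})$ with each hyperedge $e\in\mathcal{E}$ a subset of $\mathcal{V}$; $\mathcal{E}_v=\{e\in\mathcal{E}:v\in e\}$ and $d_v=|\mathcal{E}_v|$. A function is called a multiset function if it is permutation invariant with respect to each of its (set-valued) arguments in turn. MultiSet framework: each hyperedge $e$ has a representation $\bm z_e^{(t)}\in\mathbb{R}^d$ at step $t$; each node $v$ has one representation $\bm x_{v,e}^{(t)}\in\mathbb{R}^f$ for each hyperedge $e\in\mathcal{E}_v$, and $\mathbb{X}_v^{(t)}=\{\bm x_{v,e}^{(t)}\}_{e\in\mathcal{E}_v}$. The updates are $$\bm z_e^{(t+1)}=f_{\mathcal{V}\to\mathcal{E}}\big(\{\mathbb{X}_u^{(t)}\}_{u\in e};\ \bm z_e^{(t)}\big),\qquad \bm x_{v,e}^{(t+1)}=f_{\mathcal{E}\to\mathcal{V}}\big(\{\bm z_{e}^{(t+1)}\}_{e\in\mathcal{E}_v};\ \{\mathbb{X}_v^{(k)}\}_{k=0}^{t}\big),$$ and after $T$ steps a readout $\bm x_v^{(T)}=f_{\mathcal{V}\to\mathcal{V}}\big(\{\mathbb{X}_v^{(k)}\}_{k=0}^{T}\big)$, where $f_{\mathcal{V}\to\mathcal{E}}, f_{\mathcal{E}\to\mathcal{V}}$ are multiset functions with respect to their first input and $f_{\mathcal{V}\to\mathcal{V}}$ is a multiset function. *)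

From mathcomp Require Import all_boot all_order all_algebra.
From mathcomp Require Import reals.
Set Implicit Arguments. Unset Strict Implicit. Unset Printing Implicit Defensive.

(* Multisets of values indexed by nodes/edges are represented as sequences
   (listed in the enumeration order of the finite type); a "multiset function"
   is a function on sequences invariant under permutation (perm_eq). *)
Section Hypergraph.
Variables (V E : finType) (inc : V -> E -> bool).
Definition nodes_of (e : E) : seq V := [seq u <- enum V | inc u e].
Definition edges_of (v : V) : seq E := [seq e <- enum E | inc v e].
End Hypergraph.

Definition ms_inv1 (A' : eqType) (B C : Type) (F : seq A' -> B -> C) : Prop :=
  forall s t b, perm_eq s t -> F s b = F t b.

Definition ms_eq2 (A : eqType) (s t : seq (seq A)) : Prop :=
  exists t', perm_eq t t' /\ all2 (fun a b => perm_eq a b) s t'.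

(* f_{V->E} of MultiSet: multiset function w.r.t. its first input
   {X_u}_{u in e}, a multiset of multisets *)
Definition ms_inv_nested (A : eqType) (B C : Type) (F : seq (seq A) -> B -> C) : Prop :=
  forall s t b, ms_eq2 s t -> F s b = F t b.

Definition ms_inv_list (A : eqType) (C : Type) (F : seq (seq A) -> C) : Prop :=
  forall s t, all2 (fun a b => perm_eq a b) s t -> F s = F t.

Section AllSet.
Variables (V E : finType) (inc : V -> E -> bool) (X Z : Type).
Variables (fVE : seq X -> Z -> Z) (fEV : seq Z -> X -> X).
Variables (x0 : V -> X) (z0 : E -> Z).

Fixpoint allset_run (t : nat) : (V -> X) * (E -> Z) :=
  match t with
  | 0 => (x0, z0)
  | t'.+1 =>
      let (x, z) := allset_run t' in
      let z' := fun e => fVE [seq x u | u <- nodes_of inc e] (z e) in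
      let x' := fun v => fEV [seq z' e | e <- edges_of inc v] (x v) in
      (x', z')
  end.
End AllSet.

Section AllSetExt.
Variables (V E : finType) (inc : V -> E -> bool) (X Z : Type).
Variables (fVE : seq X -> Z -> Z) (fEV : seq Z -> seq X -> X).
Variables (x0 : V -> X) (z0 : E -> Z).

(* (history [x^(0); ...; x^(t)], z^(t)) *)
Fixpoint allset_ext_run (t : nat) : seq (V -> X) * (E -> Z) :=
  match t with
  | 0 => ([:: x0], z0)
  | t'.+1 =>
      let (H, z) := allset_ext_run t' in
      let x := last x0 H in
      let z' := fun e => fVE [seq x u | u <- nodes_of inc e] (z e) in
      let x' := fun v => fEV [seq z' e | e <- edges_of inc v] [seq xk v | xk <- H] in
      (rcons H x', z')
  end.

Definition allset_ext_x (t : nat) (v : V) : X := last x0 (allset_ext_run t).1 v.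
End AllSetExt.

Section MultiSet.
Variables (V E : finType) (inc : V -> E -> bool) (X Z : Type).
Variables (FVE : seq (seq X) -> Z -> Z) (FEV : seq Z -> seq (seq X) -> X)
          (FVV : seq (seq X) -> X).
Variables (xm0 : V -> E -> X) (z0 : E -> Z).

Definition Xset (xm : V -> E -> X) (v : V) : seq X :=
  [seq xm v e | e <- edges_of inc v].

(* (history [x^(0); ...; x^(t)] of the families x_{.,.}, z^(t)) *)
Fixpoint multiset_run (t : nat) : seq (V -> E -> X) * (E -> Z) :=
  match t with
  | 0 => ([:: xm0], z0)
  | t'.+1 =>
      let (H, z) := multiset_run t' in
      let xcur := last xm0 H in
      let z' := fun e => FVE [seq Xset xcur u | u <- nodes_of inc e] (z e) in
      let xn := fun v (_ : E) =>
                  FEV [seq z' e | e <- edges_of inc v] [seq Xset xk v | xk <- H] in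
      (rcons H xn, z')
  end.

Definition multiset_readout (T : nat) (v : V) : X :=
  FVV [seq Xset xk v | xk <- (multiset_run T).1].
End MultiSet.

From mathcomp Require Import all_boot all_order all_algebra.
From mathcomp Require Import reals.
From Stdlib Require Import FunctionalExtensionality.
Import GRing.Theory Num.Theory.

Local Open Scope ring_scope.

(* Let MultiSet start from copies x_{v,e}^(0) = x_v^(0). If every node update
   ignores the edge e, all copies x_{v,e}^(t) stay equal to one value x_v^(t),
   so the multiset X_v^(t) is d_v copies of x_v^(t). Since d_v > 0, any
   permutation-invariant readout that returns the common value of a nonempty
   constant multiset (e.g. the average) recovers x_v^(t) from X_v^(t). Feeding
   these readouts to the AllSet functions makes MultiSet reproduce AllSet step
   by step; plain AllSet is the extended scheme whose node update only looks
   at the last entry of the history. *)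

Lemma map_const (T U : Type) (y : U) (s : seq T) :
  [seq y | _ <- s] = nseq (size s) y.
Proof. by elim: s => //= _ s ->. Qed.

Lemma all2_last {T : Type} {r : T -> T -> bool} {x y s t} :
  r x y -> all2 r s t -> r (last x s) (last y t).
Proof.
by elim: s t x y => [|a s IHs] [|b t] //= x y _ /andP[rab /(IHs _ _ _ rab)].
Qed.

Lemma all2_eq_map {T U : Type} {r : T -> T -> bool} {g : T -> U} {s t} :
  (forall x y, r x y -> g x = g y) -> all2 r s t -> map g s = map g t.
Proof.
move=> gr; elim: s t => [|a s IHs] [|b t] //= /andP[rab /IHs ->].
by rewrite (gr _ _ rab).
Qed.

Lemma last_map_nonempty {T U : Type} (g : T -> U) (x : T) {y : U} {s} :
  (0 < size s)%N -> last y (map g s) = g (last x s).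
Proof. by case: s => //= a s _; rewrite last_map. Qed.

Section Average.
Context {R : numFieldType} {M : lmodType R}.

Definition avg (s : seq M) : M := (size s)%:R^-1 *: \sum_(x <- s) x.

Lemma perm_avg s t : perm_eq s t -> avg s = avg t.
Proof. by move=> st; rewrite /avg (perm_size st) (perm_big _ st). Qed.

Lemma avg_nseq n x : (0 < n)%N -> avg (nseq n x) = x.
Proof.
move=> n_gt0; rewrite /avg size_nseq big_nseq iter_addr_0 -scaler_nat scalerA.
by rewrite mulVf ?scale1r // pnatr_eq0 -lt0n.
Qed.
End Average.

Section PlainAsExtended.
Context {V E : finType} (inc : V -> E -> bool) {X : Type} {Z : eqType}.

Lemma size_allset_ext_run fVE (fEV : seq Z -> seq X -> X) x0 z0 t :
  size (allset_ext_run inc fVE fEV x0 z0 t).1 = t.+1.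
Proof.
elim: t => //= t; case: (allset_ext_run _ _ _ _ _ t) => H z /= size_H.
by rewrite size_rcons size_H.
Qed.

(* [xd] is never read: the history passed to the node update is nonempty. *)
Definition last_only (fEV : seq Z -> X -> X) (xd : X) : seq Z -> seq X -> X :=
  fun zs hs => fEV zs (last xd hs).

Lemma last_only_inv (fEV : seq Z -> X -> X) xd :
  ms_inv1 fEV -> ms_inv1 (last_only fEV xd).
Proof. by move=> fEV_inv s t b st; apply: fEV_inv. Qed.

Lemma allset_run_last_only fVE (fEV : seq Z -> X -> X) xd x0 z0 t :
  allset_run inc fVE fEV x0 z0 t =
  let: (H, z) := allset_ext_run inc fVE (last_only fEV xd) x0 z0 t in
  (last x0 H, z).
Proof.
elim: t => //= t; have := size_allset_ext_run fVE (last_only fEV xd) x0 z0 t.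
case: (allset_ext_run _ _ _ _ _ t) => H z /= size_H ->.
congr pair; rewrite last_rcons; apply: functional_extensionality => v.
by rewrite /last_only (last_map_nonempty (fun xk => xk v) x0) ?size_H.
Qed.

End PlainAsExtended.

Section Simulation.
Context {V E : finType} {inc : V -> E -> bool} {X Z : eqType}.
Hypothesis no_isolated : forall v : V, exists e : E, inc v e.
Variable rd : seq X -> X.
Hypothesis perm_rd : forall s t, perm_eq s t -> rd s = rd t.
Hypothesis rd_nseq : forall n x, (0 < n)%N -> rd (nseq n x) = x.

Definition copy_states (x : V -> X) : V -> E -> X := fun v _ => x v.

Definition lift_VE (fVE : seq X -> Z -> Z) : seq (seq X) -> Z -> Z :=
  fun S z => fVE (map rd S) z.

Definition lift_EV (fEV : seq Z -> seq X -> X) : seq Z -> seq (seq X) -> X :=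
  fun zs H => fEV zs (map rd H).

Definition rd_last (H : seq (seq X)) : X := rd (last [::] H).

Lemma lift_VE_inv fVE : ms_inv1 fVE -> ms_inv_nested (lift_VE fVE).
Proof.
move=> fVE_inv s t b [t' [tt' st']]; rewrite /lift_VE.
rewrite (all2_eq_map perm_rd st'); apply: fVE_inv.
by rewrite perm_sym perm_map.
Qed.

Lemma lift_EV_inv fEV : ms_inv1 fEV -> ms_inv1 (lift_EV fEV).
Proof. by move=> fEV_inv s t b st; apply: fEV_inv. Qed.

Lemma rd_last_inv : ms_inv_list rd_last.
Proof. by move=> s t st; apply/perm_rd/(all2_last _ st). Qed.

Lemma rd_Xset_copy x v : rd (Xset inc (copy_states x) v) = x v.
Proof.
have [e ve] := no_isolated v.
have e_in : e \in edges_of inc v by rewrite mem_filter ve mem_enum.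
by rewrite /Xset map_const rd_nseq //; case: (edges_of inc v) e_in.
Qed.

Lemma rd_Xsets_copy x (us : seq V) :
  map rd [seq Xset inc (copy_states x) u | u <- us] = map x us.
Proof. by rewrite -map_comp; apply: eq_map => u; apply: rd_Xset_copy. Qed.

Lemma multiset_run_copy fVE fEV x0 z0 t :
  multiset_run inc (lift_VE fVE) (lift_EV fEV) (copy_states x0) z0 t =
  let: (H, z) := allset_ext_run inc fVE fEV x0 z0 t in (map copy_states H, z).
Proof.
elim: t => //= t ->; case: (allset_ext_run _ _ _ _ _ t) => H z.
rewrite map_rcons last_map; congr (rcons _ _, _).
  apply: functional_extensionality => v; apply: functional_extensionality => ?.
  rewrite /lift_EV /lift_VE /=; congr fEV.
    by apply: eq_map => e; rewrite rd_Xsets_copy.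
  by rewrite -!map_comp; apply: eq_map => xk; apply: rd_Xset_copy.
by apply: functional_extensionality => e; rewrite /lift_VE rd_Xsets_copy.
Qed.

Lemma multiset_readout_copy fVE fEV x0 z0 T v :
  multiset_readout inc (lift_VE fVE) (lift_EV fEV) rd_last (copy_states x0) z0 T v
  = allset_ext_x inc fVE fEV x0 z0 T v.
Proof.
rewrite /multiset_readout /allset_ext_x multiset_run_copy.
have := size_allset_ext_run inc fVE fEV x0 z0 T.
case: (allset_ext_run _ _ _ _ _ T) => H z /= size_H.
by rewrite -map_comp /rd_last (last_map_nonempty _ x0) ?size_H //= rd_Xset_copy.
Qed.

Lemma allset_ext_as_multiset (fVE : seq X -> Z -> Z) (fEV : seq Z -> seq X -> X) :
  ms_inv1 fVE -> ms_inv1 fEV ->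
  exists (FVE : seq (seq X) -> Z -> Z) (FEV : seq Z -> seq (seq X) -> X)
         (FVV : seq (seq X) -> X),
    [/\ ms_inv_nested FVE, ms_inv1 FEV, ms_inv_list FVV &
    forall (x0 : V -> X) (z0 : E -> Z),
      (forall t e, (multiset_run inc FVE FEV (copy_states x0) z0 t).2 e
                   = (allset_ext_run inc fVE fEV x0 z0 t).2 e) /\
      (forall T v, multiset_readout inc FVE FEV FVV (copy_states x0) z0 T v
                   = allset_ext_x inc fVE fEV x0 z0 T v)].
Proof.
move=> fVE_inv fEV_inv; exists (lift_VE fVE), (lift_EV fEV), rd_last.
split; [exact: lift_VE_inv | exact: lift_EV_inv | exact: rd_last_inv |].
move=> x0 z0; split=> [t e|T v]; last exact: multiset_readout_copy.
by rewrite (multiset_run_copy fVE fEV x0 z0 t); case: allset_ext_run.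
Qed.

Lemma allset_as_multiset (xd : X) (fVE : seq X -> Z -> Z) (fEV : seq Z -> X -> X) :
  ms_inv1 fVE -> ms_inv1 fEV ->
  exists (FVE : seq (seq X) -> Z -> Z) (FEV : seq Z -> seq (seq X) -> X)
         (FVV : seq (seq X) -> X),
    [/\ ms_inv_nested FVE, ms_inv1 FEV, ms_inv_list FVV &
    forall (x0 : V -> X) (z0 : E -> Z),
      (forall t e, (multiset_run inc FVE FEV (copy_states x0) z0 t).2 e
                   = (allset_run inc fVE fEV x0 z0 t).2 e) /\
      (forall T v, multiset_readout inc FVE FEV FVV (copy_states x0) z0 T v
                   = (allset_run inc fVE fEV x0 z0 T).1 v)].
Proof.
move=> fVE_inv /(last_only_inv _ xd) /(allset_ext_as_multiset _ _ fVE_inv).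
case=> FVE [FEV [FVV [FVE_inv FEV_inv FVV_inv sim]]].
exists FVE, FEV, FVV; split=> // x0 z0; have [sim_z sim_x] := sim x0 z0.
split=> [t e|T v].
  by rewrite sim_z (allset_run_last_only inc _ _ xd); case: allset_ext_run.
rewrite sim_x /allset_ext_x (allset_run_last_only inc _ _ xd).
by case: allset_ext_run.
Qed.

End Simulation.

Theorem proposition2 (R : realType) (f d : nat)
    (V E : finType) (inc : V -> E -> bool)
    (no_isolated : forall v : V, exists e : E, inc v e) :
  (forall (fVE : seq 'rV[R]_f -> 'rV[R]_d -> 'rV[R]_d)
          (fEV : seq 'rV[R]_d -> 'rV[R]_f -> 'rV[R]_f),
      ms_inv1 fVE -> ms_inv1 fEV ->
      exists (FVE : seq (seq 'rV[R]_f) -> 'rV[R]_d -> 'rV[R]_d)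
             (FEV : seq 'rV[R]_d -> seq (seq 'rV[R]_f) -> 'rV[R]_f)
             (FVV : seq (seq 'rV[R]_f) -> 'rV[R]_f),
        [/\ ms_inv_nested FVE, ms_inv1 FEV, ms_inv_list FVV &
        forall (x0 : V -> 'rV[R]_f) (z0 : E -> 'rV[R]_d),
          (forall t e, (multiset_run inc FVE FEV (fun v _ => x0 v) z0 t).2 e
                       = (allset_run inc fVE fEV x0 z0 t).2 e) /\
          (forall T v, multiset_readout inc FVE FEV FVV (fun v _ => x0 v) z0 T v
                       = (allset_run inc fVE fEV x0 z0 T).1 v)]) /\
  (forall (fVE : seq 'rV[R]_f -> 'rV[R]_d -> 'rV[R]_d)
          (fEV : seq 'rV[R]_d -> seq 'rV[R]_f -> 'rV[R]_f),
      ms_inv1 fVE -> ms_inv1 fEV ->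
      exists (FVE : seq (seq 'rV[R]_f) -> 'rV[R]_d -> 'rV[R]_d)
             (FEV : seq 'rV[R]_d -> seq (seq 'rV[R]_f) -> 'rV[R]_f)
             (FVV : seq (seq 'rV[R]_f) -> 'rV[R]_f),
        [/\ ms_inv_nested FVE, ms_inv1 FEV, ms_inv_list FVV &
        forall (x0 : V -> 'rV[R]_f) (z0 : E -> 'rV[R]_d),
          (forall t e, (multiset_run inc FVE FEV (fun v _ => x0 v) z0 t).2 e
                       = (allset_ext_run inc fVE fEV x0 z0 t).2 e) /\
          (forall T v, multiset_readout inc FVE FEV FVV (fun v _ => x0 v) z0 T v
                       = allset_ext_x inc fVE fEV x0 z0 T v)]).
Proof.
split=> fVE fEV fVE_inv fEV_inv.
- exact: (allset_as_multiset no_isolated avg perm_avg avg_nseq 0 _ _ fVE_inv fEV_inv).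
- exact: (allset_ext_as_multiset no_isolated avg perm_avg avg_nseq _ _ fVE_inv fEV_inv).
Qed.
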